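(* Let $(A,\mu,\alpha,\beta)$ be a BiHom-Novikov algebra and let $\tilde\alpha,\tilde\beta:A\to A$ be two morphisms of BiHom-Novikov algebras (from $A$ to itself) such that any two of the maps $\alpha,\beta,\tilde\alpha,\tilde\beta$ commute. Then $(A,\mu\circ(\tilde\alpha\otimes\tilde\beta),\alpha\circ\tilde\alpha,\beta\circ\tilde\beta)$ is also a BiHom-Novikov algebra.
   Context: Work over a field. A BiHom-Novikov algebra is a 4-tuple $(A,\mu,\alpha,\beta)$ with $\mu:A\otimes A\to A$ (written $x\cdot y$) and commuting linear maps $\alpha,\beta:A\to A$ such that for all $x,y,z\in A$: $\alpha(x\cdot y)=\alpha(x)\cdot\alpha(y)$, $\beta(x\cdot y)=\beta(x)\cdot\beta(y)$, $(\beta(x)\cdot\alpha(y))\cdot\beta(z)-\alpha\beta(x)\cdot(\alpha(y)\cdot z)=(\beta(y)\cdot\alpha(x))\cdot\beta(z)-\alpha\beta(y)\cdot(\alpha(x)\cdot z)$, and $(x\cdot\beta(y))\cdot\alpha\beta(z)=(x\cdot\beta(z))\cdot\alpha\beta(y)$. A morphism $f:(A,\mu_A,\alpha_A,\beta_A)\to(B,\mu_B,\alpha_B,\beta_B)$ of BiHom-Novikov algebras is a linear map with $\alpha_B f=f\alpha_A$, $\beta_B f=f\beta_A$ and $f\circ\mu_A=\mu_B\circ(f\otimes f)$. *)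

From mathcomp Require Import all_boot all_order all_algebra.
Set Implicit Arguments. Unset Strict Implicit. Unset Printing Implicit Defensive.
Import GRing.Theory.
Local Open Scope ring_scope.

Definition bilinear_mul (F : fieldType) (A : lmodType F) (mu : A -> A -> A) : Prop :=
  (forall x, linear (mu x)) /\ (forall y, linear (fun x => mu x y)).

Definition is_BiHomNovikov (F : fieldType) (A : lmodType F)
  (mu : A -> A -> A) (alpha beta : {linear A -> A}) : Prop :=
  bilinear_mul mu /\
  (forall x, alpha (beta x) = beta (alpha x)) /\
  (forall x y, alpha (mu x y) = mu (alpha x) (alpha y)) /\
  (forall x y, beta (mu x y) = mu (beta x) (beta y)) /\
  (forall x y z,
     mu (mu (beta x) (alpha y)) (beta z) - mu (alpha (beta x)) (mu (alpha y) z)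
   = mu (mu (beta y) (alpha x)) (beta z) - mu (alpha (beta y)) (mu (alpha x) z)) /\
  (forall x y z,
     mu (mu x (beta y)) (alpha (beta z)) = mu (mu x (beta z)) (alpha (beta y))).

Definition is_BiHomNovikov_morphism (F : fieldType) (A B : lmodType F)
  (muA : A -> A -> A) (alphaA betaA : A -> A)
  (muB : B -> B -> B) (alphaB betaB : B -> B) (f : {linear A -> B}) : Prop :=
  (forall x, alphaB (f x) = f (alphaA x)) /\
  (forall x, betaB (f x) = f (betaA x)) /\
  (forall x y, f (muA x y) = muB (f x) (f y)).

Definition lin_comp (F : fieldType) (A : lmodType F) (f g : {linear A -> A})
  : {linear A -> A} := (f \o g)%FUN.

From mathcomp Require Import all_boot all_order all_algebra.
Import GRing.Theory.
Local Open Scope ring_scope.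

(* Since alpha' and beta' are multiplicative and all four structure maps
   commute, every map can be pushed inside the products and the maps sorted;
   each BiHom-Novikov identity of the twisted algebra at (x, y, z) then
   becomes the corresponding identity of the original algebra at images of
   x, y, z under alpha' and beta'. *)

Section Twist.

Variables (F : fieldType) (A : lmodType F) (mu : A -> A -> A).

Definition novikov_left (m : A -> A -> A) (a b : A -> A) : Prop :=
  forall x y z,
    m (m (b x) (a y)) (b z) - m (a (b x)) (m (a y) z)
  = m (m (b y) (a x)) (b z) - m (a (b y)) (m (a x) z).

Definition novikov_right (m : A -> A -> A) (a b : A -> A) : Prop :=
  forall x y z, m (m x (b y)) (a (b z)) = m (m x (b z)) (a (b y)).

Lemma bilinear_mul_twist (f g : {linear A -> A}) :
  bilinear_mul mu -> bilinear_mul (fun x y => mu (f x) (g y)).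
Proof.
move=> [mu_linr mu_linl]; split=> [x | y] c u v /=; rewrite linearP.
- exact: mu_linr.
- exact: (mu_linl (g y)).
Qed.

Lemma mul_morph_comp (f g : A -> A) :
  {morph f : x y / mu x y} -> {morph g : x y / mu x y} ->
  {morph (f \o g)%FUN : x y / mu x y}.
Proof. by move=> fM gM x y /=; rewrite gM fM. Qed.

Lemma mul_morph_twist (f phi psi : A -> A) :
  {morph f : x y / mu x y} ->
  (forall x, f (phi x) = phi (f x)) -> (forall x, f (psi x) = psi (f x)) ->
  {morph f : x y / mu (phi x) (psi y)}.
Proof. by move=> fM f_phi f_psi x y; rewrite fM f_phi f_psi. Qed.

Lemma comp_commute (f g h : A -> A) :
  (forall x, f (h x) = h (f x)) -> (forall x, g (h x) = h (g x)) ->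
  forall x, (f \o g)%FUN (h x) = h ((f \o g)%FUN x).
Proof. by move=> fh gh x /=; rewrite gh fh. Qed.

Variables alpha beta alpha' beta' : {linear A -> A}.

Hypotheses (alphaM : {morph alpha : x y / mu x y})
           (betaM : {morph beta : x y / mu x y})
           (alpha'M : {morph alpha' : x y / mu x y})
           (beta'M : {morph beta' : x y / mu x y}).

Hypotheses (alpha_beta : forall x, alpha (beta x) = beta (alpha x))
           (alpha_alpha' : forall x, alpha (alpha' x) = alpha' (alpha x))
           (alpha_beta' : forall x, alpha (beta' x) = beta' (alpha x))
           (beta_alpha' : forall x, beta (alpha' x) = alpha' (beta x))
           (beta_beta' : forall x, beta (beta' x) = beta' (beta x))
           (alpha'_beta' : forall x, alpha' (beta' x) = beta' (alpha' x)).

(* Normal form: structure maps inside the products, composed in the order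
   alpha, beta, alpha', beta' from the outside in. *)
Local Ltac normalize :=
  rewrite ?(alphaM, betaM, alpha'M, beta'M);
  rewrite -?(alpha_beta, alpha_alpha', alpha_beta', beta_alpha', beta_beta',
             alpha'_beta').

Let mu' x y := mu (alpha' x) (beta' y).

Lemma twist_alpha_beta x :
  (alpha \o alpha')%FUN ((beta \o beta')%FUN x)
  = (beta \o beta')%FUN ((alpha \o alpha')%FUN x).
Proof. by rewrite /=; normalize. Qed.

Lemma twist_novikov_left :
  novikov_left mu alpha beta ->
  novikov_left mu' (alpha \o alpha') (beta \o beta').
Proof.
move=> novikov x y z; rewrite /mu' /=.
have := novikov (alpha' (alpha' (beta' x))) (alpha' (alpha' (beta' y)))
                (beta' (beta' z)).
by normalize => E; normalize.
Qed.

Lemma twist_novikov_right :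
  novikov_right mu alpha beta ->
  novikov_right mu' (alpha \o alpha') (beta \o beta').
Proof.
move=> novikov x y z; rewrite /mu' /=.
have := novikov (alpha' (alpha' x)) (alpha' (beta' (beta' y)))
                (alpha' (beta' (beta' z))).
by normalize => E; normalize.
Qed.

End Twist.

Theorem proposition2p3 (F : fieldType) (A : lmodType F) (mu : A -> A -> A)
  (alpha beta alpha' beta' : {linear A -> A}) :
  is_BiHomNovikov mu alpha beta ->
  is_BiHomNovikov_morphism mu alpha beta mu alpha beta alpha' ->
  is_BiHomNovikov_morphism mu alpha beta mu alpha beta beta' ->
  (forall x, alpha (beta x) = beta (alpha x)) ->
  (forall x, alpha (alpha' x) = alpha' (alpha x)) ->
  (forall x, alpha (beta' x) = beta' (alpha x)) ->
  (forall x, beta (alpha' x) = alpha' (beta x)) ->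
  (forall x, beta (beta' x) = beta' (beta x)) ->
  (forall x, alpha' (beta' x) = beta' (alpha' x)) ->
  is_BiHomNovikov (fun x y => mu (alpha' x) (beta' y))
    (lin_comp alpha alpha') (lin_comp beta beta').
Proof.
move=> [mu_bilin [_ [alphaM [betaM [novikov_l novikov_r]]]]]
  [_ [_ alpha'M]] [_ [_ beta'M]] a_b a_a' a_b' b_a' b_b' a'_b'.
have b'_a' x : beta' (alpha' x) = alpha' (beta' x) by rewrite a'_b'.
rewrite /lin_comp /=; split; [exact: bilinear_mul_twist|].
split; [exact: twist_alpha_beta|].
split.
  apply: mul_morph_twist; first exact: mul_morph_comp.
  - exact: comp_commute.
  - exact: comp_commute.
split.
  apply: mul_morph_twist; first exact: mul_morph_comp.
  - exact: comp_commute.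
  - exact: comp_commute.
split; [exact: twist_novikov_left | exact: twist_novikov_right].
Qed.
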